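(* Let $T$ be a finite tree rooted at a vertex $r$, and let $\omega: V(T)\to [0,\infty)$ be a nonnegative weight function with $\omega(T)=\sum_{v\in V(T)}\omega(v)=1$. Then at least one of the following holds: (i) there is a vertex $u\in V(T)$ such that the unique $(r,u)$-path $P$ in $T$ satisfies $\omega(P)\ge \frac13$; (ii) there exist unrelated sets $A,B\subseteq V(T)$ with $\omega(A)\ge\frac13$ and $\omega(B)\ge\frac13$. Moreover, the constant $\frac13$ is best possible: for every real $c>\frac13$ there exist a finite tree $T$ rooted at $r$ and a nonnegative weight function $\omega$ on $V(T)$ with $\omega(T)=1$ such that every $(r,u)$-path $P$ ($u\in V(T)$) has $\omega(P)<c$ and every pair of unrelated sets $A,B\subseteq V(T)$ has $\min\{\omega(A),\omega(B)\}<c$.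
   Context: Let $T$ be a tree rooted at $r$. A vertex $y$ is a descendant of a vertex $x$ if $x$ lies on the unique $(r,y)$-path in $T$ (so every vertex is a descendant of itself). Two vertices of $T$ are related if one is a descendant of the other; otherwise they are unrelated. Two subsets $A,B\subseteq V(T)$ are unrelated if every $a\in A$ and every $b\in B$ are unrelated (in particular $A\cap B=\emptyset$). For $S\subseteq V(T)$, $\omega(S)=\sum_{s\in S}\omega(s)$, and for a subgraph $H$ of $T$, $\omega(H)=\omega(V(H))$. *)

From HB Require Import structures.
From mathcomp Require Import all_boot all_order all_algebra.
Set Implicit Arguments. Unset Strict Implicit. Unset Printing Implicit Defensive.
Import Order.TTheory GRing.Theory Num.Theory.

(* A finite rooted tree on vertex set T (a finType) is given by a parent map
   [par] and a root [r]: the root is its own parent and every vertex reaches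
   the root by iterating [par].  (Such a map is automatically acyclic off r,
   and the graph with edges {v, par v}, v <> r, is a tree rooted at r.) *)
Definition rooted_tree (T : finType) (par : T -> T) (r : T) : Prop :=
  par r = r /\ forall v : T, exists k : nat, iter k par v = r.

(* Since the
   depth of any vertex is < #|T|, bounding k by #|T| loses nothing. *)
Definition desc (T : finType) (par : T -> T) (x y : T) : bool :=
  [exists k : 'I_#|T|, iter k par y == x].

Definition related (T : finType) (par : T -> T) (x y : T) : bool :=
  desc par x y || desc par y x.

Definition unrelated_sets (T : finType) (par : T -> T) (A B : {set T}) : Prop :=
  forall a b, a \in A -> b \in B -> ~~ related par a b.

Definition root_path (T : finType) (par : T -> T) (u : T) : {set T} :=
  [set x | desc par x u].

Definition wt (R : numDomainType) (T : finType) (w : T -> R) (S : {set T}) : R :=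
  (\sum_(s in S) w s)%R.

From HB Require Import structures.
From mathcomp Require Import all_boot all_order all_algebra zify lra.
Import Order.TTheory GRing.Theory Num.Theory.
Set Implicit Arguments. Unset Strict Implicit. Unset Printing Implicit Defensive.
Local Open Scope ring_scope.

(* Order the vertices depth-first, by comparing their downward root paths
   lexicographically.  Every subtree is then an interval of this order starting
   at its root, so for any vertex v the vertices from v on and the vertices
   before v that are not ancestors of v form two unrelated sets, which together
   with the (r, v)-path cover T.  Take v last such that the vertices from v on
   weigh at least 1/3: those strictly after v weigh less than 1/3, so if the
   (r, v)-path is light too, the vertices before v off the path weigh more than
   1/3.  A star with three leaves of weight 1/3 shows that 1/3 is optimal. *)

Lemma lexi_prefix d (O : orderType d) (p s : seq O) :
  prefix p s -> (p <= s :> seqlexi O)%O.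
Proof.
elim: p s => [|x p IHp] [|y s] //; rewrite prefix_cons => /andP[/eqP <- /IHp].
by rewrite eqhead_lexiE.
Qed.

Lemma lexi_prefix_convex d (O : orderType d) (p s t : seq O) :
  (p <= s :> seqlexi O)%O -> (s <= p ++ t :> seqlexi O)%O -> prefix p s.
Proof.
elim: p s => [|x p IHp] [|y s] //; rewrite !lexi_cons prefix_cons.
case/andP=> xy /implyP ps /andP[yx /implyP sp].
have xy' : x = y by apply/eqP; rewrite eq_le xy yx.
by rewrite xy' eqxx IHp ?ps ?sp // xy'.
Qed.

Section WeightCut.
Variables (R : realDomainType) (T : finType) (d : Order.disp_t) (O : orderType d).
Variables (key : T -> O) (w : T -> R) (c : R).

Definition key_ge (v : T) : {set T} := [set x | (key v <= key x)%O].
Definition key_gt (v : T) : {set T} := [set x | (key v < key x)%O].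

Lemma exists_weight_cut (x0 : T) : 0 < c -> c <= wt w (key_ge x0) ->
  exists v, c <= wt w (key_ge v) /\ wt w (key_gt v) < c.
Proof.
move=> c_gt0 heavy_x0.
have [v heavy_v v_max] := @arg_maxP _ _ _ x0 (fun v => c <= wt w (key_ge v)) key heavy_x0.
exists v; split => //; rewrite ltNge; apply/negP => heavy_gt.
have [x1 x1_gt] : exists x1, (key v < key x1)%O.
  have /set0Pn[x1] : key_gt v != set0.
    by apply: contraTneq heavy_gt => ->; rewrite /wt big_set0 -ltNge.
  by rewrite inE; exists x1.
have [v' v'_gt v'_min] := @arg_minP _ _ _ x1 (fun y => key v < key y)%O key x1_gt.
have ge_v' : key_ge v' = key_gt v.
  apply/setP => x; rewrite !inE; apply/idP/idP; last exact: v'_min.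
  exact: lt_le_trans.
by have := v_max v'; rewrite ge_v' => /(_ heavy_gt)/(lt_le_trans v'_gt); rewrite ltxx.
Qed.
End WeightCut.

Section RootedTree.
Variables (T : finType) (par : T -> T) (r : T).
Hypothesis tree : rooted_tree par r.

Lemma iter_root k : iter k par r = r.
Proof. by case: tree => par_r _; elim: k => //= k ->. Qed.

Lemma reaches_root v : exists k, iter k par v == r.
Proof. by case: tree => _ /(_ v) [k <-]; exists k. Qed.

Definition depth v := ex_minn (reaches_root v).

Lemma iter_depth v : iter (depth v) par v = r.
Proof. by rewrite /depth; case: ex_minnP => k /eqP. Qed.

Lemma depth_le v k : iter k par v = r -> (depth v <= k)%N.
Proof. by rewrite /depth; case: ex_minnP => m _ min_m /eqP /min_m. Qed.

Lemma iter_minn_depth v k : iter k par v = iter (minn k (depth v)) par v.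
Proof.
case: (leqP (depth v) k) => // dk.
by rewrite -(subnK dk) iterD iter_depth iter_root.
Qed.

Definition ancestors v := traject par v (depth v).+1.

Lemma uniq_ancestors v : uniq (ancestors v).
Proof.
rewrite /ancestors looping_uniq /looping iter_depth.
by apply/trajectP => -[i lt_i /esym/depth_le]; rewrite leqNgt lt_i.
Qed.

Lemma depth_lt_card v : (depth v < #|T|)%N.
Proof.
have /card_uniqP := uniq_ancestors v.
by rewrite size_traject => <-; apply: max_card.
Qed.

Lemma descE x y : desc par x y = (x \in ancestors y).
Proof.
apply/existsP/trajectP => [[k /eqP <-]|[i lt_i ->]].
  by exists (minn k (depth y)); rewrite ?ltnS ?geq_minr // -iter_minn_depth.
by exists (Ordinal (leq_trans lt_i (depth_lt_card y))).
Qed.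

Lemma desc_refl x : desc par x x.
Proof. by rewrite descE /ancestors trajectS mem_head. Qed.

Lemma desc_root x : desc par r x.
Proof. by rewrite descE; apply/trajectP; exists (depth x); rewrite ?iter_depth. Qed.

Lemma depth_iter v i : (i <= depth v)%N -> depth (iter i par v) = (depth v - i)%N.
Proof.
move=> le_i; apply/eqP; rewrite eqn_leq; apply/andP; split.
  by apply: depth_le; rewrite -iterD subnK ?iter_depth.
have : (depth v <= depth (iter i par v) + i)%N by apply: depth_le; rewrite iterD iter_depth.
lia.
Qed.

Lemma ancestors_desc x y :
  desc par x y -> exists s, ancestors y = s ++ ancestors x.
Proof.
rewrite descE => /trajectP[i lt_i ->]; exists (traject par y i).
by rewrite /ancestors -trajectD depth_iter // -subSn // subnKC // ltnW.
Qed.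

Definition code v : seqlexi nat := rev [seq val (enum_rank u) | u <- ancestors v].

Lemma code_inj : injective code.
Proof.
move=> x y; rewrite /code /ancestors !trajectS /= !rev_cons.
by move=> /(congr1 (last 0%N)); rewrite !last_rcons => /val_inj/enum_rank_inj.
Qed.

Lemma prefix_codeE x y : prefix (code x) (code y) = desc par x y.
Proof.
apply/idP/idP => [/prefixP[t code_y] | /ancestors_desc[s anc_y]].
  have : val (enum_rank x) \in code y.
    rewrite code_y mem_cat /code mem_rev (map_f (fun u => val (enum_rank u))) //.
    by rewrite /ancestors trajectS mem_head.
  by rewrite mem_rev descE => /mapP[u u_anc /val_inj/enum_rank_inj ->].
by rewrite /code anc_y map_cat rev_cat prefix_prefix.
Qed.

Lemma desc_code_le x y : desc par x y -> (code x <= code y)%O.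
Proof. by rewrite -prefix_codeE; apply: lexi_prefix. Qed.

Lemma desc_code_between x y v :
  desc par x y -> (code x <= code v <= code y)%O -> desc par x v.
Proof.
rewrite -!prefix_codeE => /prefixP[t ->] /andP[xv vy].
exact: lexi_prefix_convex vy.
Qed.

Definition left_of v : {set T} := [set x | (code x < code v)%O && ~~ desc par x v].

Lemma unrelated_left_of v : unrelated_sets par (left_of v) (key_ge code v).
Proof.
move=> a b; rewrite !inE => /andP[av a_nv] vb; rewrite /related negb_or.
apply/andP; split.
  by apply: contra a_nv => ab; apply: (desc_code_between ab); rewrite (ltW av).
by apply/negP => /desc_code_le ba; have := le_lt_trans (le_trans vb ba) av; rewrite ltxx.
Qed.

Lemma left_of_cover v x :
  [|| x \in left_of v, x \in root_path par v | x \in key_gt code v].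
Proof.
rewrite !inE; case: (ltgtP (code x) (code v)) => [_|_|/code_inj ->].
- by case: (desc par x v); rewrite ?orbT.
- by rewrite !orbT.
- by rewrite desc_refl orbT.
Qed.

Lemma unrelated_sets_sym (A B : {set T}) :
  unrelated_sets par A B -> unrelated_sets par B A.
Proof. by move=> unrel_AB b a bB aA; rewrite /related orbC; apply: unrel_AB. Qed.

Lemma unrelated_sets_disjoint (A B : {set T}) :
  unrelated_sets par A B -> A :&: B = set0.
Proof.
move=> unrel_AB; apply/setP => x; rewrite !inE; apply/negP => /andP[xA xB].
by have := unrel_AB x x xA xB; rewrite /related desc_refl.
Qed.

Lemma unrelated_sets_root (A B : {set T}) :
  unrelated_sets par A B -> r \in A -> B = set0.
Proof.
move=> unrel_AB rA; apply/setP => x; rewrite inE; apply/negP => xB.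
by have := unrel_AB r x rA xB; rewrite /related desc_root.
Qed.

End RootedTree.

Section Weights.
Variables (R : realFieldType) (T : finType) (w : T -> R).
Hypothesis w_ge0 : forall v, 0 <= w v.

Lemma wt_le_cover3 (S A B C : {set T}) :
  (forall x, x \in S -> [|| x \in A, x \in B | x \in C]) ->
  wt w S <= wt w A + wt w B + wt w C.
Proof.
move=> cover; rewrite /wt !(big_mkcond (fun s => s \in _)) -!big_split /=.
apply: ler_sum => x _; have := w_ge0 x.
case xS: (x \in S); last by case: (x \in A); case: (x \in B); case: (x \in C) => /= ?; lra.
by move: (cover x xS); case: (x \in A); case: (x \in B); case: (x \in C) => //= _ ?; lra.
Qed.

Lemma root_path_or_unrelated_pair (par : T -> T) (r : T) (c : R) :
  rooted_tree par r -> 0 < c -> c *+ 3 <= \sum_v w v ->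
  (exists u, c <= wt w (root_path par u))
  \/ (exists A B : {set T}, unrelated_sets par A B /\ c <= wt w A /\ c <= wt w B).
Proof.
move=> tree c_gt0 heavy_T.
have [/existsP[u heavy_u] | /existsPn light] :=
  boolP [exists u, c <= wt w (root_path par u)]; first by left; exists u.
right.
have total : wt w [set: T] = \sum_v w v by apply: eq_bigl => x; rewrite inE.
have ge_root : key_ge (code tree) r = [set: T].
  by apply/setP => x; rewrite !inE desc_code_le ?desc_root.
have [v [heavy_v light_gt]] : exists v, c <= wt w (key_ge (code tree) v)
    /\ wt w (key_gt (code tree) v) < c.
  by apply: (exists_weight_cut (x0 := r)) => //; rewrite ge_root total; lra.
exists (left_of tree v), (key_ge (code tree) v); do !split => //.
  exact: unrelated_left_of.
have := wt_le_cover3 (S := [set: T]) (fun x _ => left_of_cover tree v x).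
by rewrite total; move: (light v); rewrite -ltNge; lra.
Qed.

End Weights.

Lemma natrV_mulrn (F : numFieldType) n : (0 < n)%N -> (n%:R : F)^-1 *+ n = 1.
Proof. by move=> n_gt0; rewrite -(mulr_natr (n%:R^-1)) mulVf ?pnatr_eq0 -?lt0n. Qed.

Section Star.
Variable R : realFieldType.

Definition star_par (_ : 'I_4) : 'I_4 := ord0.
Definition star_wt (i : 'I_4) : R := if i == ord0 then 0 else 3^-1.

Lemma star_rooted : rooted_tree star_par ord0.
Proof. by split=> // v; exists 1%N. Qed.

Lemma star_desc x y : desc star_par x y = (x == y) || (x == ord0).
Proof.
have lt0 : (0 < #|'I_4|)%N by rewrite card_ord.
have lt1 : (1 < #|'I_4|)%N by rewrite card_ord.
apply/existsP/orP => [[[[|k] k_lt] /eqP <-]|]; [by left | by right|].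
by case=> /eqP ->; [exists (Ordinal lt0) | exists (Ordinal lt1)].
Qed.

Lemma star_wt_ge0 i : 0 <= star_wt i.
Proof. by rewrite /star_wt; case: ifP; rewrite ?invr_ge0 ?ler0n. Qed.

Lemma wt_star_leaves (S : {set 'I_4}) : ord0 \notin S -> wt star_wt S = 3^-1 *+ #|S|.
Proof.
move=> S0; rewrite /wt -sumr_const; apply: eq_bigr => i iS; rewrite /star_wt ifF //.
by apply: contraNF S0 => /eqP <-.
Qed.

Lemma star_wt_sum : \sum_i star_wt i = 1.
Proof.
have -> : \sum_i star_wt i = star_wt ord0 + wt star_wt [set~ ord0].
  by rewrite (bigD1 ord0) //=; congr (_ + _); apply: eq_bigl => i; rewrite !inE.
rewrite wt_star_leaves ?setC11 // cardsC1 card_ord /star_wt /= add0r.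
exact: natrV_mulrn.
Qed.

Lemma star_root_path u : wt star_wt (root_path star_par u) <= 3^-1.
Proof.
apply: le_trans (@wt_le_cover3 _ _ _ star_wt_ge0 _ [set u] [set ord0] set0 _) _.
  by move=> x; rewrite !inE star_desc orbF.
rewrite /wt !big_set1 big_set0 [star_wt ord0]/star_wt /= !addr0 /star_wt.
by case: ifP; rewrite ?invr_ge0 ?ler0n.
Qed.

Lemma star_unrelated (A B : {set 'I_4}) : unrelated_sets star_par A B ->
  Num.min (wt star_wt A) (wt star_wt B) <= 3^-1.
Proof.
move=> unrel_AB; have wt0 : wt star_wt set0 = 0 by rewrite /wt big_set0.
have third_ge0 : (0 : R) <= 3^-1 by rewrite invr_ge0 ler0n.
have [A0|A0] := boolP (ord0 \in A).
  by rewrite (unrelated_sets_root star_rooted unrel_AB A0) wt0 ge_min third_ge0 orbT.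
have [B0|B0] := boolP (ord0 \in B).
  by rewrite (unrelated_sets_root star_rooted (unrelated_sets_sym unrel_AB) B0) wt0 ge_min third_ge0.
have cardAB : (#|A| + #|B| <= 3)%N.
  rewrite -cardsUI (unrelated_sets_disjoint star_rooted unrel_AB) cards0 addn0.
  have : A :|: B \subset [set~ ord0].
    by apply/subsetP => x; rewrite !inE; case/orP; apply: contraTneq => ->.
  by move/subset_leq_card; rewrite cardsC1 card_ord.
rewrite !wt_star_leaves // ge_min.
have small k : (k <= 1)%N -> (3^-1 : R) *+ k <= 3^-1.
  by case: k => [|[|]] //= _; rewrite ?mulr0n.
by case: (leqP #|A| 1) => [/small -> // | ?]; rewrite (small #|B|) ?orbT //; lia.
Qed.

End Star.

Theorem theorem2 (R : archiRealFieldType) :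
  (forall (T : finType) (par : T -> T) (r : T) (w : T -> R),
     rooted_tree par r ->
     (forall v, 0 <= w v) ->
     \sum_(v : T) w v = 1 ->
     (exists u : T, wt w (root_path par u) >= 3^-1)
     \/ (exists A B : {set T}, unrelated_sets par A B /\
           wt w A >= 3^-1 /\ wt w B >= 3^-1))
  /\
  (forall c : R, 3^-1 < c ->
     exists (T : finType) (par : T -> T) (r : T) (w : T -> R),
       [/\ rooted_tree par r,
           (forall v, 0 <= w v),
           \sum_(v : T) w v = 1,
           (forall u : T, wt w (root_path par u) < c) &
           (forall A B : {set T}, unrelated_sets par A B ->
              Num.min (wt w A) (wt w B) < c)]).
Proof.
split=> [T par r w tree w_ge0 total | c third_lt_c].
  apply: (root_path_or_unrelated_pair w_ge0 tree); first by rewrite invr_gt0 ltr0n.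
  by rewrite total natrV_mulrn.
exists 'I_4, star_par, ord0, (@star_wt R); split.
- exact: star_rooted.
- exact: star_wt_ge0.
- exact: star_wt_sum.
- by move=> u; apply: le_lt_trans (star_root_path R u) third_lt_c.
- by move=> A B /(star_unrelated R) min_le; apply: le_lt_trans min_le third_lt_c.
Qed.
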